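(* Let $f:[0,1]\to[0,1]$ be a continuous surjective function that does not admit a splitting sequence. If $f$ admits a 2-cycle $\{s,t\}$ with $s\in\{0,1\}$, then $(s,t,s,t,\dots)$ and $(t,s,t,s,\dots)$ are endpoints of $\varprojlim f$.
   Context: $\varprojlim f=\{\mathbf x=(x_0,x_1,\dots)\in[0,1]^{\mathbb N}: f(x_{n+1})=x_n\ \forall n\}$ with the product topology. A point $p$ of a continuum $X$ is an endpoint of $X$ if for any two subcontinua $A,B$ of $X$ containing $p$, $A\subseteq B$ or $B\subseteq A$. A 2-cycle is a set $\{s,t\}$ with $s\ne t$, $f(s)=t$, $f(t)=s$. A sequence $(T_n)_{n\in\mathbb N}$ of closed intervals $T_n\subsetneq[0,1]$ (possibly degenerate) is tight if $f(T_{n+1})=T_n$ for every $n$ and $T_n$ is nondegenerate for all sufficiently large $n$. A tight sequence $(T_n)$, $T_n=[l_n,r_n]$, is a splitting sequence admitted by $f$ if there are an infinite set $N\subseteq\mathbb N$ and nondegenerate closed intervals $S_n\subseteq[0,1]$ ($n\in N$) with $S_n\cap T_n\subseteq\{l_n,r_n\}$ and $f(S_n)=f(T_n)$ for all $n\in N$. *)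

From HB Require Import structures.
From mathcomp Require Import all_boot all_order all_algebra.
From mathcomp Require Import all_classical all_reals all_analysis.
Set Implicit Arguments. Unset Strict Implicit. Unset Printing Implicit Defensive.
Import Order.TTheory GRing.Theory Num.Theory numFieldTopology.Exports numFieldNormedType.Exports.
Local Open Scope classical_set_scope.
Local Open Scope ring_scope.

(* The ambient space [0,1]^N is modelled inside R^N = nat -> R with the
   product (pointwise) topology {ptws nat -> R}. *)
Notation seqspace R := {ptws nat -> R}.

Definition invlim (R : realType) (f : R -> R) : set (seqspace R) :=
  [set x | (forall n, x n \in `[0, 1]) /\ (forall n, f (x n.+1) = x n)].

(* a subcontinuum of X : nonempty compact connected subset of X
   (the ambient space is Hausdorff, so compact = closed in X) *)
Definition subcontinuum (R : realType) (X A : set (seqspace R)) : Prop :=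
  A `<=` X /\ A !=set0 /\ compact A /\ connected A.

Definition is_endpoint (R : realType) (X : set (seqspace R)) (p : seqspace R) : Prop :=
  X p /\
  forall A B, subcontinuum X A -> subcontinuum X B -> A p -> B p ->
    A `<=` B \/ B `<=` A.

Definition tight (R : realType) (f : R -> R) (l r : nat -> R) : Prop :=
  (forall n, 0 <= l n /\ l n <= r n /\ r n <= 1) /\
  (forall n, [set` `[l n, r n]] != [set` `[0, 1]] :> set R) /\
  (forall n, f @` [set` `[l n.+1, r n.+1]] = [set` `[l n, r n]]) /\
  (exists N, forall n, (N <= n)%N -> l n < r n).

Definition splitting_sequence (R : realType) (f : R -> R) (l r : nat -> R) : Prop :=
  tight f l r /\
  exists (N : set nat) (a b : nat -> R),
    (forall m, exists n, (m <= n)%N /\ N n) /\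
    (forall n, N n ->
       0 <= a n /\ a n < b n /\ b n <= 1 /\
       [set` `[a n, b n]] `&` [set` `[l n, r n]] `<=` [set l n; r n] /\
       f @` [set` `[a n, b n]] = f @` [set` `[l n, r n]]).

Definition admits_splitting (R : realType) (f : R -> R) : Prop :=
  exists l r : nat -> R, splitting_sequence f l r.

Definition alt_seq (R : realType) (u v : R) : seqspace R :=
  fun n => if odd n then v else u.

From HB Require Import structures.
From mathcomp Require Import all_boot all_order all_algebra.
From mathcomp Require Import all_classical all_reals all_analysis.
Set Implicit Arguments. Unset Strict Implicit. Unset Printing Implicit Defensive.
Import Order.TTheory GRing.Theory Num.Theory numFieldTopology.Exports numFieldNormedType.Exports.
Local Open Scope classical_set_scope.
Local Open Scope ring_scope.

(* A point p of the inverse limit with p_n in {0, 1} for infinitely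
   many n is always an endpoint.  The n-th projection of a subcontinuum is a
   subinterval of [0,1]; two such intervals both containing the extreme point
   p_n are nested.  Since x_j = f^(k-j)(x_k) on threads, nesting of the k-th
   projections propagates to all j <= k, so of two subcontinua through p one
   has all its projections inside those of the other, and closedness then
   gives inclusion of the subcontinua themselves.  The alternating sequences
   of a 2-cycle through 0 or 1 visit that point at every other coordinate. *)

Section Threads.
Variables (T : Type) (f : T -> T).

Definition thread : set (nat -> T) := [set x | forall n, f (x n.+1) = x n].

Lemma thread_eq_le (x y : nat -> T) j k :
  thread x -> thread y -> (j <= k)%N -> x k = y k -> x j = y j.
Proof.
move=> hx hy /subnK <-; elim: (k - j)%N => // d IH e.
by apply: IH; rewrite -hx -hy -addSn e.
Qed.

Lemma coord_image_subset_le (A B : set (nat -> T)) j k :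
  A `<=` thread -> B `<=` thread -> (j <= k)%N ->
  [set x k | x in A] `<=` [set x k | x in B] ->
  [set x j | x in A] `<=` [set x j | x in B].
Proof.
move=> Athr Bthr jk AkB _ [x Ax <-].
have [y By yx] : [set x k | x in B] (x k) by apply: AkB; exists x.
by exists y => //; apply: thread_eq_le yx; [apply: Bthr|apply: Athr|].
Qed.

End Threads.

Lemma closed_prefix_approx (T : uniformType) (B : set {ptws nat -> T})
    (x : {ptws nat -> T}) :
  closed B -> (forall m, exists y, B y /\ forall j, (j <= m)%N -> y j = x j) ->
  B x.
Proof.
move=> cB /choice[y /all_and2[By yx]].
apply: (@closed_cvg _ _ \oo _ y B cB); first exact: nearW.
apply/pointwise_cvgP => j.
apply: (@cvg_near_cst _ _ (x j) (fun m => y m j)); near=> m; apply: yx; near: m.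
by exists j.
Unshelve. all: by end_near.
Qed.

Lemma thread_subset_of_coord_image_subset (T : uniformType) (f : T -> T)
    (A B : set {ptws nat -> T}) :
  A `<=` thread f -> B `<=` thread f -> closed B ->
  (forall m, exists2 n, (m <= n)%N & [set x n | x in A] `<=` [set x n | x in B]) ->
  A `<=` B.
Proof.
move=> Athr Bthr cB AnB x Ax; apply: closed_prefix_approx cB _ => m.
have [n mn /(_ (x n))[|y By yx]] := AnB m; first by exists x.
exists y; split=> // j jm.
by apply: thread_eq_le yx; [apply: Bthr|apply: Athr|apply: leq_trans mn].
Qed.

Section Reals.
Variable R : realType.

Lemma is_interval_coord_image (A : set (seqspace R)) n :
  connected A -> is_interval [set x n | x in A].
Proof.
move=> cA; apply/connected_intervalP; apply: connected_continuous_connected => //.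
by apply: continuous_subspaceT => x; apply: proj_continuous.
Qed.

Lemma interval_nested_at_extremum (C D : set R) s :
  is_interval C -> is_interval D -> C s -> D s ->
  (forall c, (C `|` D) c -> s <= c) \/ (forall c, (C `|` D) c -> c <= s) ->
  C `<=` D \/ D `<=` C.
Proof.
move=> iC iD Cs Ds ext.
have [CD|/existsNP[u /not_implyP[Cu Du]]] := pselect (C `<=` D); first by left.
right=> v Dv; apply: contrapT => Cv.
have CDu : (C `|` D) u by left.
have CDv : (C `|` D) v by right.
case: ext => [smin|smax]; case: (leP u v) => uv.
- by apply: Du; apply: (iD s v) => //; rewrite smin.
- by apply: Cv; apply: (iC s u) => //; rewrite smin //= ltW.
- by apply: Cv; apply: (iC u s) => //; rewrite uv smax.
- by apply: Du; apply: (iD v s) => //; rewrite ltW //= smax.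
Qed.

Lemma invlim_endpoint (f : R -> R) (p : seqspace R) :
  invlim f p -> (forall m, exists2 n, (m <= n)%N & (p n = 0 \/ p n = 1)) ->
  is_endpoint (invlim f) p.
Proof.
move=> ip p01; split=> // A B [AX [_ [cA conA]]] [BX [_ [cB conB]]] Ap Bp.
have Athr : A `<=` thread f by move=> x /AX[].
have Bthr : B `<=` thread f by move=> x /BX[].
have coord01 (X : set (seqspace R)) : X `<=` invlim f ->
    forall n c, [set x n | x in X] c -> 0 <= c <= 1.
  by move=> Xinv n _ [x /Xinv[x01 _] <-]; have := x01 n; rewrite in_itv.
have [A01 B01] := (coord01 A AX, coord01 B BX).
have nested n : p n = 0 \/ p n = 1 ->
    [set x n | x in A] `<=` [set x n | x in B] \/
    [set x n | x in B] `<=` [set x n | x in A].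
  move=> pn; apply: (interval_nested_at_extremum (s := p n));
    [exact: is_interval_coord_image|exact: is_interval_coord_image
    |by exists p|by exists p|].
  by case: pn => ->; [left|right] => c [/A01|/B01] /andP[].
have closed_of (X : set (seqspace R)) : compact X -> closed X.
  by apply: compact_closed; apply: hausdorff_product => _; apply: Rhausdorff.
have [AB|/existsNP[n0 nAB]] :=
    pselect (forall n, [set x n | x in A] `<=` [set x n | x in B]).
  left; apply: (thread_subset_of_coord_image_subset Athr Bthr (closed_of _ cB)).
  by move=> m; exists m.
right; apply: (thread_subset_of_coord_image_subset Bthr Athr (closed_of _ cA)).
move=> m; have [n] := p01 (maxn m n0); rewrite geq_max => /andP[mn n0n] pn.
exists n => //; case: (nested n pn) => // AnB.
by case: nAB; apply: (coord_image_subset_le Athr Bthr n0n).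
Qed.

Lemma alt_seq_invlim (f : R -> R) u v :
  u \in `[0, 1] -> v \in `[0, 1] -> f u = v -> f v = u -> invlim f (alt_seq u v).
Proof. by move=> u01 v01 fu fv; split=> n; rewrite /alt_seq //=; case: odd. Qed.

Lemma alt_seq_often (u v : R) m :
  (exists2 n, (m <= n)%N & alt_seq u v n = u) /\
  (exists2 n, (m <= n)%N & alt_seq u v n = v).
Proof.
have le_double : (m <= m.*2)%N by rewrite -addnn leq_addr.
split; [exists m.*2|exists m.*2.+1]; rewrite /alt_seq /= ?odd_double //.
exact: leqW.
Qed.

End Reals.

Theorem lemma3p20 (R : realType) (f : R -> R) (s t : R) :
  {within [set` `[0, 1]], continuous f} ->
  f @` [set` `[0, 1]] = [set` `[0, 1]] ->
  ~ admits_splitting f ->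
  s != t -> f s = t -> f t = s -> (s = 0 \/ s = 1) ->
  is_endpoint (invlim f) (alt_seq s t) /\ is_endpoint (invlim f) (alt_seq t s).
Proof.
move=> _ f_onto _ _ fs ft s01.
have s_in : s \in `[0, 1] by case: s01 => ->; rewrite in_itv /= lexx ler01.
have t_in : t \in `[0, 1] by have : [set` `[0, 1]] t by rewrite -f_onto; exists s.
split; apply: invlim_endpoint; try exact: alt_seq_invlim.
- by move=> m; have [[n mn sn] _] := alt_seq_often s t m; exists n => //; rewrite sn.
- by move=> m; have [_ [n mn sn]] := alt_seq_often t s m; exists n => //; rewrite sn.
Qed.
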